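(* Let $X$ be an extensible marked Dynkin diagram with $d$ nodes and let $\Delta$ be the common difference of $\{\det(X_n)\}_{n\ge d}$. Then there exists a sequence of integers $(a_i)_{i\ge1}$, depending only on $X$ and its node numbering, such that in $P(X_n)$ $$(-\Delta)\,\omega_i^{(n)}\equiv a_i\,\overline{\omega}_1^{(n)}\pmod{Q(X_n)}$$ for all $i=1,\dots,n$ and for all $n\ge d$ such that $\det(X_n)\ne0$. Moreover, the $a_i$ are the unique integers with this property.
   Context: A marked Dynkin diagram $X$ has nodes $1,\dots,d$ with node $d$ distinguished and symmetrizable generalized Cartan matrix $C(X)$. For $n\ge d$, $X_n$ is obtained by attaching a simply-laced chain of new nodes $d+1,\dots,n$ to node $d$ (so $C(X_n)$ has $C(X)$ as upper-left block, $2$ on the remaining diagonal, $-1$ in positions $(i,i+1),(i+1,i)$ for $d\le i<n$, $0$ elsewhere). $\det(Y)$ is the determinant of the generalized Cartan matrix of $Y$. $X$ is extensible if $\Delta\ne0$, $\det(X)\ne0$ and $\gcd(\Delta,\det X)=1$. For $\mathfrak g(X_n)$: simple roots $\alpha_i^{(n)}$, coroots $\check\alpha_i^{(n)}$ with $\alpha_j^{(n)}(\check\alpha_i^{(n)})=C(X_n)_{ij}$, root lattice $Q(X_n)$, weight lattice $P(X_n)$, fundamental weights $\omega_i^{(n)}$ with $\omega_i^{(n)}(\check\alpha_j^{(n)})=\delta_{ij}$, and $\overline{\omega}_i^{(n)}=\omega_{n-i+1}^{(n)}$. *)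

From HB Require Import structures.
From mathcomp Require Import all_boot all_order all_algebra.
Set Implicit Arguments. Unset Strict Implicit. Unset Printing Implicit Defensive.
Import Order.TTheory GRing.Theory Num.Theory.
Local Open Scope ring_scope.

(* A marked Dynkin diagram X with d nodes is given by its generalized Cartan
   matrix A : 'M[int]_d; nodes 1..d are the indices 0..d-1, the distinguished
   node d is the index d-1. *)

Definition is_GCM (d : nat) (A : 'M[int]_d) : Prop :=
  (forall i, A i i = 2) /\
  (forall i j, i != j -> A i j <= 0) /\
  (forall i j, (A i j == 0) = (A j i == 0)).

Definition symmetrizable (d : nat) (A : 'M[int]_d) : Prop :=
  exists D : 'I_d -> rat, (forall i, 0 < D i) /\
    (forall i j, D i * (A i j)%:~R = D j * (A j i)%:~R).

(* C(X_n): attach a simply-laced chain d+1..n to node d (used for n >= d) *)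
Definition ext_mx (d : nat) (A : 'M[int]_d) (n : nat) : 'M[int]_n :=
  \matrix_(i < n, j < n)
    match (insub (val i) : option 'I_d), (insub (val j) : option 'I_d) with
    | Some i', Some j' => A i' j'
    | _, _ => if i == j then 2
              else if ((val i).+1 == val j) || ((val j).+1 == val i) then -1
              else 0
    end.

Definition detX (d : nat) (A : 'M[int]_d) (n : nat) : int := \det (ext_mx A n).

(* Delta: the common difference of the arithmetic sequence (det X_n)_{n >= d} *)
Definition Delta (d : nat) (A : 'M[int]_d) : int := detX A d.+1 - detX A d.

Definition extensible (d : nat) (A : 'M[int]_d) : Prop :=
  Delta A != 0 /\ \det A != 0 /\ gcdz (Delta A) (\det A) = 1.

(* Weights of g(X_n) written in the basis of fundamental weights omega_i^(n):
   omega_i is the i-th unit column vector.  The simple root alpha_j has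
   coordinates alpha_j(check alpha_i) = C_{ij}, i.e. it is the j-th column of
   C(X_n); hence Q(X_n) = C(X_n) *m Z^n. *)
Definition omega (n : nat) (i : 'I_n) : 'cV[int]_n := delta_mx i 0.

Definition congr_Q (d : nat) (A : 'M[int]_d) (n : nat) (v w : 'cV[int]_n) : Prop :=
  exists c : 'cV[int]_n, v - w = ext_mx A n *m c.

(* the property of the sequence a (indexed by i = 1, 2, ...):
   (-Delta) omega_i^(n) = a_i omegabar_1^(n) mod Q(X_n), omegabar_1^(n) = omega_n^(n) *)
Definition weight_congr_prop (d : nat) (A : 'M[int]_d) (a : nat -> int) : Prop :=
  forall n : nat, (d <= n)%N -> detX A n != 0 ->
    forall (i : 'I_n) (Hn : (n.-1 < n)%N),
      congr_Q A ((- Delta A) *: omega i) (a (val i).+1 *: omega (Ordinal Hn)).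

From HB Require Import structures.
From mathcomp Require Import all_boot all_order all_algebra zify ring.
Import Order.TTheory GRing.Theory Num.Theory.
Set Implicit Arguments. Unset Strict Implicit. Unset Printing Implicit Defensive.
Local Open Scope ring_scope.

(* Because det X_n = det X + (n - d) Delta
   and gcd(Delta, det X) = 1, consecutive determinants det X_(n-1), det X_n are
   coprime.  For an integer matrix M whose determinant is coprime to its last
   principal minor, w lies in M Z^n as soon as det M divides the last entry of
   adj(M) w.  Choosing a_i as the (n0, i) entry of adj C(X_n0), n0 = max(d, i),
   makes this hold for n = n0, and a solution for X_n extends to X_(n+1) by
   repeating its last coordinate.  Conversely, if c omegabar_1 lies in Q(X_n)
   then det X_n divides c det X_(n-1), hence c; since |det X_n| is unbounded,
   two admissible sequences agree. *)

Lemma lift_ord_max n (j : 'I_n) : lift ord_max j = widen_ord (leqnSn n) j.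
Proof. exact/val_inj/lift_max. Qed.

Lemma cofactor_diag (R : pzRingType) n (M : 'M[R]_n) i :
  cofactor M i i = \det (row' i (col' i M)).
Proof. by rewrite /cofactor -signr_odd addnn odd_double mul1r. Qed.

Lemma det_chain_tail (R : comPzRingType) m (M : 'M[R]_m.+2) :
    (forall j : 'I_m.+2, (j < m)%N -> M ord_max j = 0) ->
    (forall i : 'I_m.+2, (i < m)%N -> M i ord_max = 0) ->
  \det M = M ord_max ord_max * \det (row' ord_max (col' ord_max M))
    - M ord_max (lift ord_max ord_max) * M (lift ord_max ord_max) ord_max
      * \det (row' ord_max (col' ord_max (row' ord_max (col' ord_max M)))).
Proof.
move=> M_row M_col; set p := lift ord_max ord_max.
rewrite (expand_det_row _ ord_max) !big_ord_recr /=.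
rewrite big1 ?add0r; last first.
  by move=> j _; rewrite M_row ?mul0r /=.
rewrite [cofactor _ ord_max ord_max]cofactor_diag addrC -lift_ord_max -/p.
congr (_ + _).
have lift_p : lift p ord_max = ord_max.
  by apply: val_inj; rewrite /= /bump ltnn leqnn.
rewrite /cofactor (expand_det_col _ ord_max) big_ord_recr /= big1 ?add0r; last first.
  move=> i _; rewrite !mxE lift_p M_col ?mul0r // lift_max; exact: (ltn_ord i).
rewrite /cofactor !mxE lift_p.
have -> : row' ord_max (col' ord_max (row' ord_max (col' p M)))
    = row' ord_max (col' ord_max (row' ord_max (col' ord_max M))).
  apply/matrixP => i j; rewrite !mxE; congr (M _ _); apply: val_inj.
  have := ltn_ord j; rewrite /= /bump ltnn add0n.
  by case: leqP; case: ltnP => //= *; lia.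
have sgn_odd : (-1) ^+ m.*2.+1 = -1 :> R by rewrite -signr_odd /= odd_double.
have sgn_even : (-1) ^+ m.*2 = 1 :> R by rewrite -signr_odd odd_double.
rewrite /= /bump ltnn add0n addSn !addnn sgn_odd sgn_even.
ring.
Qed.

Section IntegerColumnSpace.

Variables (m : nat) (M : 'M[int]_m.+1).

Local Notation minor := (row' ord_max (col' ord_max M)).

Hypothesis det_coprime : coprimez (\det M) (\det minor).

Lemma mulmx_lift_max (x : 'cV[int]_m.+1) (k : 'I_m) :
  (M *m x) (lift ord_max k) 0
  = (minor *m row' ord_max x) k 0 + M (lift ord_max k) ord_max * x ord_max 0.
Proof.
rewrite !mxE big_ord_recr /=; congr (_ + _); apply: eq_bigr => j _.
by rewrite !mxE !lift_ord_max.
Qed.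

Lemma dvdz_det_adj_mul (w : 'cV[int]_m.+1) :
    (\det M %| (\adj M *m w) ord_max 0%R)%Z ->
  forall j, (\det M %| (\adj M *m w) j 0%R)%Z.
Proof.
move=> dvd_last j; set z := \adj M *m w.
have Mz : M *m z = \det M *: w by rewrite mulmxA mul_mx_adj mul_scalar_mx.
have dvd_minor_z k : (\det M %| (minor *m row' ord_max z) k 0%R)%Z.
  have := mulmx_lift_max z k; rewrite Mz mxE => /eqP; rewrite -subr_eq => /eqP <-.
  by rewrite rpredB ?(dvdz_mulr _ (dvdzz _)) ?(dvdz_mull _ dvd_last).
case: (unliftP ord_max j) => [k ->|->] //.
have adj_minor : \det minor *: row' ord_max z = \adj minor *m (minor *m row' ord_max z).
  by rewrite mulmxA mul_adj_mx mul_scalar_mx.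
have := congr1 (fun v : 'cV[int]_m => v k 0) adj_minor.
rewrite /= !mxE => minor_zk.
rewrite -(Gauss_dvdzr _ det_coprime) minor_zk.
by apply: rpred_sum => l _; rewrite dvdz_mull.
Qed.

Lemma colspan_adj_last (w : 'cV[int]_m.+1) (t : int) :
    \det M != 0 ->
    (\adj M *m w) ord_max 0 = t * \det M ->
  exists2 x, M *m x = w & x ord_max 0 = t.
Proof.
move=> det_neq0 adj_last; set z := \adj M *m w.
have dvd_z : forall j, (\det M %| z j 0%R)%Z.
  by apply: dvdz_det_adj_mul; rewrite // adj_last dvdz_mull.
set x := \col_j (z j 0%R %/ \det M)%Z.
have z_eq : \det M *: x = z.
  by apply/colP => j; rewrite [LHS]mxE [in LHS]mxE mulrC divzK.
exists x; last by rewrite mxE adj_last mulzK.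
apply/subr0_eq/eqP.
have := scalemx_eq0 (\det M) (M *m x - w); rewrite (negbTE det_neq0) /= => <-.
by rewrite scalerBr scalemxAr z_eq mulmxA mul_mx_adj mul_scalar_mx subrr.
Qed.

Lemma dvdz_det_of_mul_last (x : 'cV[int]_m.+1) (c : int) :
    M *m x = c *: delta_mx ord_max 0 -> (\det M %| c)%Z.
Proof.
move=> Mx; have := congr1 (fun v => (\adj M *m v) ord_max 0) Mx.
rewrite /= mulmxA mul_adj_mx mul_scalar_mx -scalemxAr -colE !mxE cofactor_diag.
by rewrite -(Gauss_dvdzl _ det_coprime) => <-; apply: dvdz_mulr.
Qed.

End IntegerColumnSpace.

Section ExtendedDiagram.

Variables (d : nat) (A : 'M[int]_d).

Lemma ext_mx_dim : ext_mx A d = A.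
Proof. by apply/matrixP => i j; rewrite mxE !valK. Qed.

Lemma ext_mx_widen n (i j : 'I_n) :
  ext_mx A n.+1 (widen_ord (leqnSn n) i) (widen_ord (leqnSn n) j) = ext_mx A n i j.
Proof. by rewrite !mxE. Qed.

Lemma ext_mx_minor n : row' ord_max (col' ord_max (ext_mx A n.+1)) = ext_mx A n.
Proof. by apply/matrixP => i j; rewrite 2!mxE !lift_ord_max ext_mx_widen. Qed.

Lemma ext_mx_last_row n (j : 'I_n.+1) : (d <= n)%N ->
  ext_mx A n.+1 ord_max j = if j == n :> nat then 2 else if j.+1 == n then -1 else 0.
Proof.
move=> le_dn; rewrite mxE insubF /=; last by rewrite ltnNge le_dn.
by rewrite -val_eqE /= eq_sym (gtn_eqF (ltn_ord j)).
Qed.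

Lemma ext_mx_last_col n (i : 'I_n.+1) : (d <= n)%N ->
  ext_mx A n.+1 i ord_max = if i == n :> nat then 2 else if i.+1 == n then -1 else 0.
Proof.
move=> le_dn; rewrite mxE [insub n]insubF /=; last by rewrite ltnNge le_dn.
have -> : (i == ord_max) = (i == n :> nat) by rewrite -val_eqE.
by case: insub; rewrite (gtn_eqF (ltn_ord i)) orbF.
Qed.

Lemma ext_mx_last_row_far n (j : 'I_n.+1) : (d <= n)%N -> (j.+1 < n)%N ->
  ext_mx A n.+1 ord_max j = 0.
Proof. by move=> le_dn lt_jn; rewrite ext_mx_last_row // !ltn_eqF // ltnW. Qed.

Lemma ext_mx_last_col_far n (i : 'I_n.+1) : (d <= n)%N -> (i.+1 < n)%N ->
  ext_mx A n.+1 i ord_max = 0.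
Proof. by move=> le_dn lt_in; rewrite ext_mx_last_col // !ltn_eqF // ltnW. Qed.

Lemma detX_rec n : (d <= n.+1)%N -> detX A n.+2 = 2 * detX A n.+1 - detX A n.
Proof.
move=> le_dn; rewrite /detX det_chain_tail; first last.
- by move=> i lt_in; rewrite ext_mx_last_col_far.
- by move=> j lt_jn; rewrite ext_mx_last_row_far.
rewrite !ext_mx_minor !ext_mx_last_row // ext_mx_last_col //= /bump ltnn add0n.
by rewrite eqxx (ltn_eqF (ltnSn n)) /=; ring.
Qed.

Lemma ext_mulmx_widen n (f : nat -> int) (k : 'I_n) : (d <= n)%N ->
  (ext_mx A n.+1 *m \col_(j < n.+1) f j) (widen_ord (leqnSn n) k) 0
  = (ext_mx A n *m \col_(j < n) f j) k 0 - (k.+1 == n)%:R * f n.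
Proof.
move=> le_dn; rewrite !mxE big_ord_recr /=; congr (_ + _).
  by apply: eq_bigr => j _; rewrite ext_mx_widen !mxE.
rewrite ext_mx_last_col // (ltn_eqF (ltn_ord k)) mxE.
by case: (_ == _); rewrite /= ?mul0r ?subr0 ?mulN1r ?mul1r.
Qed.

Lemma ext_mulmx_last n (f : nat -> int) : (d <= n.+1)%N ->
  (ext_mx A n.+2 *m \col_(j < n.+2) f j) ord_max 0 = 2 * f n.+1 - f n.
Proof.
move=> le_dn; rewrite !mxE !big_ord_recr /= big1 ?add0r; last first.
  by move=> j _; rewrite ext_mx_last_row_far ?mul0r //= ltnS.
by rewrite !ext_mx_last_row //= (ltn_eqF (ltnSn n)) !eqxx !mxE /=; ring.
Qed.

(* (-Delta) omega_i - a omegabar_1 in fundamental-weight coordinates, indexed by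
   nat so that it makes sense for every n. *)
Definition weight_diff (i : nat) (a : int) n : 'cV[int]_n :=
  \col_(k < n) ((k == i :> nat)%:R * - Delta A - (k.+1 == n)%:R * a).

Lemma weight_diff_solution_succ n (i : nat) (a : int) (f : nat -> int) :
    (d <= n)%N -> (i < n)%N -> f n.-1 = - a -> f n = - a ->
    ext_mx A n *m \col_(j < n) f j = weight_diff i a n ->
  ext_mx A n.+1 *m \col_(j < n.+1) f j = weight_diff i a n.+1.
Proof.
case: n => [|n] // le_dn lt_in f_pred f_last sol; apply/colP => k.
case: (unliftP ord_max k) => [k' ->|->].
  rewrite lift_ord_max ext_mulmx_widen // sol f_last !mxE /=.
  have -> : (k'.+1 == n.+2) = false by rewrite eqSS; exact: ltn_eqF (ltn_ord k').
  by rewrite /=; lia.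
rewrite ext_mulmx_last ?f_pred ?f_last ?mxE //= eqxx (gtn_eqF lt_in).
by rewrite /=; lia.
Qed.

Lemma weight_diff_solution_ge n0 (i : nat) (a : int) (f : nat -> int) :
    (d <= n0)%N -> (i < n0)%N -> (forall j, (n0.-1 <= j)%N -> f j = - a) ->
    ext_mx A n0 *m \col_(j < n0) f j = weight_diff i a n0 ->
  forall n, (n0 <= n)%N -> ext_mx A n *m \col_(j < n) f j = weight_diff i a n.
Proof.
move=> le_dn0 lt_in0 f_tail sol0; elim=> [|n IH]; first by move/(leq_trans lt_in0).
rewrite leq_eqVlt => /orP[/eqP <- // | lt_n0n].
by apply: weight_diff_solution_succ; rewrite ?f_tail ?IH //; lia.
Qed.

End ExtendedDiagram.

Section ExtensibleDiagram.

Variables (d : nat) (A : 'M[int]_d.+1).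

Lemma detX_dim : detX A d.+1 = \det A.
Proof. by rewrite /detX ext_mx_dim. Qed.

Lemma detX_diff n : (d <= n)%N -> detX A n.+1 - detX A n = Delta A.
Proof.
move=> /subnK <-; elim: (n - d)%N => [|k IH].
  by rewrite /Delta add0n (detX_rec A (leqnn _)); ring.
by rewrite addSn detX_rec -?IH; [ring | rewrite ltnS leq_addl].
Qed.

Lemma detX_arith k : detX A (d.+1 + k) = \det A + k%:Z * Delta A.
Proof.
elim: k => [|k IH]; first by rewrite addn0 detX_dim mul0r addr0.
have /eqP := detX_diff (leq_trans (leqnSn d) (leq_addr k d.+1)).
by rewrite subr_eq IH addnS => /eqP ->; rewrite intS; ring.
Qed.

Lemma coprimez_detX_succ n :
  gcdz (Delta A) (\det A) = 1 -> (d <= n)%N -> coprimez (detX A n.+1) (detX A n).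
Proof.
move=> Delta_det_coprime le_dn; have diff_n := detX_diff le_dn.
have D_n : detX A n = ((n - d)%N%:Z - 1) * Delta A + \det A.
  by move: diff_n; rewrite -[n in detX A n.+1](subnKC le_dn) -addSn detX_arith; lia.
have -> : detX A n.+1 = detX A n + Delta A by rewrite -diff_n addrC subrK.
by rewrite /coprimez gcdzC gcdzDl gcdzC D_n gcdzMDl Delta_det_coprime.
Qed.

Lemma detX_unbounded (N : nat) :
  Delta A != 0 -> exists2 n, (N <= n)%N & (N < `|detX A n|)%N.
Proof.
rewrite -absz_gt0 => Delta_gt0.
exists (d.+1 + (N + `|\det A|.+1)); first lia.
rewrite detX_arith; nia.
Qed.

(* a_m is the (n0, m) entry of adj C(X_n0), n0 = max(d, m) in the numbering of
   the paper: a cofactor of C(X) for m < d, and det X_(m-1) for m >= d. *)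
Definition weight_coeff (m : nat) : int :=
  \adj (ext_mx A (maxn d m.-1).+1) ord_max (inord m.-1).

Lemma weight_base i :
    gcdz (Delta A) (\det A) = 1 -> \det A != 0 ->
  exists2 x : 'cV[int]_(maxn d i).+1,
    ext_mx A (maxn d i).+1 *m x = weight_diff A i (weight_coeff i.+1) (maxn d i).+1
    & x ord_max 0 = - weight_coeff i.+1.
Proof.
move=> Delta_det_coprime det_neq0; rewrite /weight_coeff /=.
set n := maxn d i; set C := ext_mx A n.+1; set a := \adj C ord_max (inord i).
have le_dn : (d <= n)%N := leq_maxl d i.
have adj_last : \adj C ord_max ord_max = detX A n.
  by rewrite mxE cofactor_diag ext_mx_minor.
have det_C : \det C = detX A n + Delta A.
  by rewrite -(detX_diff le_dn) addrC subrK.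
have -> : weight_diff A i a n.+1
    = (- Delta A) *: delta_mx (inord i) 0 - a *: delta_mx ord_max 0.
  apply/colP => k; rewrite !mxE -!val_eqE /= inordK ?ltnS ?leq_maxr //.
  by rewrite eqSS !mulr_natl; lia.
have [lt_id | le_di] := ltnP i d.
  apply: colspan_adj_last.
  - by rewrite ext_mx_minor coprimez_detX_succ.
  - by rewrite /C /n (maxn_idPl (ltnW lt_id)) ext_mx_dim.
  have a_cof : cofactor C (inord i) ord_max = a by rewrite /a mxE.
  rewrite mulmxBr -!scalemxAr -!colE !mxE a_cof cofactor_diag ext_mx_minor.
  by rewrite -/(detX A n) det_C; ring.
have i_eq : inord i = ord_max :> 'I_n.+1.
  by apply/val_inj; rewrite /= inordK ?ltnS ?leq_maxr // /n (maxn_idPr le_di).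
rewrite /a i_eq adj_last.
exists (- (\adj C *m delta_mx ord_max 0)); last by rewrite mxE -colE mxE adj_last.
rewrite mulmxN mulmxA mul_mx_adj mul_scalar_mx det_C -scaleNr -scalerBl.
by congr (_ *: _); ring.
Qed.

Lemma weight_coeff_congr :
  gcdz (Delta A) (\det A) = 1 -> \det A != 0 -> weight_congr_prop A weight_coeff.
Proof.
move=> Delta_det_coprime det_neq0 n le_dn _ i last_lt.
set n0 := maxn d i; set a := weight_coeff i.+1.
have [x sol0 x_last] := weight_base i Delta_det_coprime det_neq0.
rewrite -/n0 -/a in x sol0 x_last.
pose f j := if (j <= n0)%N then x (inord j) 0 else - a.
have col_f : \col_(j < n0.+1) f j = x.
  by apply/colP => j; rewrite mxE /f -ltnS ltn_ord inord_val.
have f_tail j : (n0 <= j)%N -> f j = - a.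
  rewrite /f leq_eqVlt => /orP[/eqP <- | lt_n0j]; last by rewrite leqNgt lt_n0j.
  by rewrite leqnn -x_last; congr (x _ 0); apply/val_inj; rewrite /= inordK.
have sol : ext_mx A n *m \col_(j < n) f j = weight_diff A i a n.
  apply: (weight_diff_solution_ge (n0 := n0.+1)); rewrite ?col_f //= ?ltnS ?leq_maxr //.
    exact: leq_maxl.
  by rewrite gtn_max le_dn ltn_ord.
exists (\col_(j < n) f j); rewrite sol; apply/colP => k.
rewrite !mxE -!val_eqE /= !eqxx !andbT -[X in (_.+1 == X)](ltn_predK last_lt) eqSS.
by rewrite !mulr_natl; lia.
Qed.

Lemma weight_congr_unique (a b : nat -> int) :
  gcdz (Delta A) (\det A) = 1 -> Delta A != 0 ->
  weight_congr_prop A a -> weight_congr_prop A b -> forall m, (0 < m)%N -> a m = b m.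
Proof.
move=> Delta_det_coprime Delta_neq0 cong_a cong_b m m_gt0; set c := a m - b m.
have [[|n] le_n lt_cn] := detX_unbounded (d.+1 + m + `|c|) Delta_neq0; first lia.
have detX_neq0 : detX A n.+1 != 0 by rewrite -absz_eq0; lia.
have le_dn : (d.+1 <= n.+1)%N by lia.
have lt_mn : (m.-1 < n.+1)%N by lia.
have [xa Ea] := cong_a n.+1 le_dn detX_neq0 (Ordinal lt_mn) (ltnSn n).
have [xb Eb] := cong_b n.+1 le_dn detX_neq0 (Ordinal lt_mn) (ltnSn n).
rewrite /= prednK // in Ea Eb.
have C_diff : ext_mx A n.+1 *m (xb - xa) = c *: delta_mx ord_max 0.
  rewrite mulmxBr -Ea -Eb /c scalerBl /omega.
  have -> : Ordinal (ltnSn n) = ord_max by apply: val_inj.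
  by rewrite [X in X - _]addrC addrKA opprK addrC.
have dvd_c : (detX A n.+1 %| c)%Z.
  by apply: (dvdz_det_of_mul_last _ C_diff); rewrite ext_mx_minor coprimez_detX_succ.
apply/subr0_eq/eqP; rewrite -/c -absz_eq0; rewrite dvdzE in dvd_c.
rewrite eqn0Ngt; apply/negP => c_gt0.
by have := dvdn_leq c_gt0 dvd_c; lia.
Qed.

End ExtensibleDiagram.

Theorem proposition3p3 (d : nat) (A : 'M[int]_d) :
  (0 < d)%N -> is_GCM A -> symmetrizable A -> extensible A ->
  exists a : nat -> int,
    weight_congr_prop A a /\
    (forall b : nat -> int, weight_congr_prop A b ->
       forall i : nat, (0 < i)%N -> b i = a i).
Proof.
case: d A => [|d] A // _ _ _ [Delta_neq0 [det_neq0 Delta_det_coprime]].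
have cong_a := weight_coeff_congr Delta_det_coprime det_neq0.
exists (weight_coeff A); split=> // b cong_b m.
exact: weight_congr_unique Delta_det_coprime Delta_neq0 cong_b cong_a m.
Qed.
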